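(* For all host types and all $s,s_1,s_2,s_3$ of the appropriate $\mathsf{sf}$ types, host functions $f,g$ and values $c,d$, the following hold up to bisimilarity $\sim$ (writing $s_1\ggg s_2$ for $\mathit{comp}\,s_1\,s_2$): (1) $\mathit{arr}\,\mathrm{id}\ggg s\sim s$; (2) $s\ggg\mathit{arr}\,\mathrm{id}\sim s$; (3) $(s_1\ggg s_2)\ggg s_3\sim s_1\ggg(s_2\ggg s_3)$; (4) $\mathit{arr}(g\circ f)\sim\mathit{arr}\,f\ggg\mathit{arr}\,g$; (5) $\mathit{first}\,s\ggg\mathit{arr}\,\pi_1\sim\mathit{arr}\,\pi_1\ggg s$; (6) $\mathit{first}\,s\ggg\mathit{arr}(\mathrm{id}\times f)\sim\mathit{arr}(\mathrm{id}\times f)\ggg\mathit{first}\,s$; (7) $\mathit{first}(\mathit{first}\,s)\ggg\mathit{arr}\,\mathit{assoc}\sim\mathit{arr}\,\mathit{assoc}\ggg\mathit{first}\,s$; (8) $\mathit{first}(\mathit{arr}\,f)\sim\mathit{arr}(f\times\mathrm{id})$; (9) $\mathit{first}(s_1\ggg s_2)\sim\mathit{first}\,s_1\ggg\mathit{first}\,s_2$; (10) $\mathit{loop}\,c\,(\mathit{first}\,s_1\ggg s_2)\sim s_1\ggg\mathit{loop}\,c\,s_2$; (11) $\mathit{loop}\,c\,(s_1\ggg\mathit{first}\,s_2)\sim\mathit{loop}\,c\,s_1\ggg s_2$; (12) $\mathit{loop}\,c\,(\mathit{loop}\,d\,s)\sim\mathit{loop}\,(c,d)\,(\mathit{arr}\,\mathit{unassoc}\ggg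 s\ggg\mathit{arr}\,\mathit{assoc})$. That is, $\mathit{arr},\mathit{comp},\mathit{first},\mathit{loop}$ form an arrow with loops (up to $\sim$).
   Context: Host language: types are sets, functions total, with binary products $A\times B$, projections $\pi_1,\pi_2$, and $f\times g=\lambda(x,y).(f x,g y)$, $\mathit{assoc}=\lambda((x,y),z).(x,(y,z))$, $\mathit{unassoc}=\lambda(x,(y,z)).((x,y),z)$. For types $A,B$, $\mathsf{sf}\,A\,B$ is the final-coalgebra (coinductive) type with $\mathsf{sf}\,A\,B\cong A\to(B\times\mathsf{sf}\,A\,B)$. Corecursive definitions: $\mathit{arr}\,f=\lambda x.(f\,x,\mathit{arr}\,f)$ for $f:A\to B$; $\mathit{comp}\,s_1\,s_2=\lambda a.(c,\mathit{comp}\,s_1'\,s_2')$ where $(b,s_1')=s_1\,a$ and $(c,s_2')=s_2\,b$; $\mathit{first}\,s=\lambda(x,z).((y,z),\mathit{first}\,s')$ where $(y,s')=s\,x$ (so $\mathit{first}:\mathsf{sf}\,A\,B\to\mathsf{sf}(A\times C)(B\times C)$); $\mathit{loop}\,v\,s=\lambda x.(y,\mathit{loop}\,v'\,s')$ where $((y,v'),s')=s\,(x,v)$, for $v:C$ and $s:\mathsf{sf}(A\times C)(B\times C)$, giving $\mathsf{sf}\,A\,B$. A relation $R$ on $\mathsf{sf}\,A\,B$ is a bisimulation if whenever $R\,s_1\,s_2$ and $s_1\,a=(b,s_1')$, then $s_2\,a=(b,s_2')$ for some $s_2'$ with $R\,s_1'\,s_2'$; bisimilarity $\sim$ is the largest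 bisimulation. *)

Set Implicit Arguments.

CoInductive sf (A B : Type) : Type := SF : (A -> B * sf A B) -> sf A B.
Arguments SF {A B} _.

Definition run {A B : Type} (s : sf A B) : A -> B * sf A B :=
  match s with SF f => f end.

Definition pi1 {X Y : Type} (p : X * Y) : X := fst p.
Definition pi2 {X Y : Type} (p : X * Y) : Y := snd p.
Definition prodmap {X Y X' Y' : Type} (f : X -> X') (g : Y -> Y') (p : X * Y) : X' * Y' :=
  (f (fst p), g (snd p)).
Definition assoc {X Y Z : Type} (p : (X * Y) * Z) : X * (Y * Z) :=
  let '((x, y), z) := p in (x, (y, z)).
Definition unassoc {X Y Z : Type} (p : X * (Y * Z)) : (X * Y) * Z :=
  let '(x, (y, z)) := p in ((x, y), z).

CoFixpoint arr {A B : Type} (f : A -> B) : sf A B :=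
  SF (fun x => (f x, arr f)).

CoFixpoint comp {A B C : Type} (s1 : sf A B) (s2 : sf B C) : sf A C :=
  SF (fun a => let '(b, s1') := run s1 a in
               let '(c, s2') := run s2 b in
               (c, comp s1' s2')).

CoFixpoint first {A B C : Type} (s : sf A B) : sf (A * C) (B * C) :=
  SF (fun p => let '(x, z) := p in
               let '(y, s') := run s x in
               ((y, z), first s')).

CoFixpoint loop {A B C : Type} (v : C) (s : sf (A * C) (B * C)) : sf A B :=
  SF (fun x => let '((y, v'), s') := run s (x, v) in
               (y, loop v' s')).

Definition is_bisimulation {A B : Type} (R : sf A B -> sf A B -> Prop) : Prop :=
  forall s1 s2, R s1 s2 -> forall a b s1',
    run s1 a = (b, s1') -> exists s2', run s2 a = (b, s2') /\ R s1' s2'.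

Definition bisim {A B : Type} (s1 s2 : sf A B) : Prop :=
  exists R : sf A B -> sf A B -> Prop, is_bisimulation R /\ R s1 s2.

Notation "s1 ~~ s2" := (bisim s1 s2) (at level 70).
Notation "s1 >>> s2" := (comp s1 s2) (at level 40, left associativity).


(* Every law is proved by the same coinduction: for each input both sides
   produce the same output and continue as the two sides of the same law at
   updated parameters (the continuations of the component stream functions,
   and for [loop] the new feedback value).  Hence the relation "being the two
   sides of one instance of the law" is a bisimulation. *)

Lemma bisim_coind {X A B : Type} (F G : X -> sf A B) :
  (forall x a, exists b x', run (F x) a = (b, F x') /\ run (G x) a = (b, G x')) ->
  forall x, F x ~~ G x.
Proof.
  intros step x.
  exists (fun u v => exists x, u = F x /\ v = G x); split; [| now exists x].
  intros u v [y [-> ->]] a b u' Hrun.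
  destruct (step y a) as [b' [y' [HF HG]]].
  rewrite HF in Hrun; injection Hrun as <- <-.
  exists (G y'); split; [exact HG | now exists y'].
Qed.

Lemma comp_arr_idl (A B : Type) (s : sf A B) : arr (fun x : A => x) >>> s ~~ s.
Proof.
  apply (bisim_coind (fun s : sf A B => arr (fun x : A => x) >>> s) (fun s => s)).
  intros s0 a; cbn; destruct (run s0 a) as [b s']; now exists b, s'.
Qed.

Lemma comp_arr_idr (A B : Type) (s : sf A B) : s >>> arr (fun x : B => x) ~~ s.
Proof.
  apply (bisim_coind (fun s : sf A B => s >>> arr (fun x : B => x)) (fun s => s)).
  intros s0 a; cbn; destruct (run s0 a) as [b s']; now exists b, s'.
Qed.

Lemma compA (A B C D : Type) (s1 : sf A B) (s2 : sf B C) (s3 : sf C D) :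
  (s1 >>> s2) >>> s3 ~~ s1 >>> (s2 >>> s3).
Proof.
  refine (bisim_coind (fun '(s1, s2, s3) => (s1 >>> s2) >>> s3)
                      (fun '(s1, s2, s3) => s1 >>> (s2 >>> s3)) _ (s1, s2, s3)).
  intros [[t1 t2] t3] a; cbn.
  destruct (run t1 a) as [b t1']; cbn.
  destruct (run t2 b) as [c t2']; cbn.
  destruct (run t3 c) as [d t3'].
  now exists d, (t1', t2', t3').
Qed.

Lemma arr_comp (A B C : Type) (f : A -> B) (g : B -> C) :
  arr (fun x => g (f x)) ~~ arr f >>> arr g.
Proof.
  refine (bisim_coind (fun _ : unit => arr (fun x => g (f x)))
                      (fun _ : unit => arr f >>> arr g) _ tt).
  intros _ a; now exists (g (f a)), tt.
Qed.

Lemma first_pi1 (A B C : Type) (s : sf A B) :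
  @first A B C s >>> arr pi1 ~~ arr pi1 >>> s.
Proof.
  apply (bisim_coind (fun s => @first A B C s >>> arr pi1)
                     (fun s => arr (@pi1 A C) >>> s)).
  intros s0 [x z]; cbn; destruct (run s0 x) as [y s']; now exists y, s'.
Qed.

Lemma first_exchange (A B C D : Type) (s : sf A B) (f : C -> D) :
  first s >>> arr (prodmap (fun x : B => x) f)
  ~~ arr (prodmap (fun x : A => x) f) >>> first s.
Proof.
  apply (bisim_coind (fun s => first s >>> arr (prodmap (fun x : B => x) f))
                     (fun s => arr (prodmap (fun x : A => x) f) >>> first s)).
  intros s0 [x z]; cbn; destruct (run s0 x) as [y s']; now exists (y, f z), s'.
Qed.

Lemma first_assoc (A B C D : Type) (s : sf A B) :
  @first _ _ D (@first _ _ C s) >>> arr assoc ~~ arr assoc >>> first s.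
Proof.
  apply (bisim_coind (fun s => @first _ _ D (@first _ _ C s) >>> arr assoc)
                     (fun s => arr (@assoc A C D) >>> first s)).
  intros s0 [[x z] w]; cbn; destruct (run s0 x) as [y s'];
    now exists (y, (z, w)), s'.
Qed.

Lemma first_arr (A B C : Type) (f : A -> B) :
  @first A B C (arr f) ~~ arr (prodmap f (fun x : C => x)).
Proof.
  refine (bisim_coind (fun _ : unit => @first A B C (arr f))
                      (fun _ : unit => arr (prodmap f (fun x : C => x))) _ tt).
  intros _ [x z]; now exists (f x, z), tt.
Qed.

Lemma first_comp (A B C D : Type) (s1 : sf A B) (s2 : sf B C) :
  @first _ _ D (s1 >>> s2) ~~ first s1 >>> first s2.
Proof.
  refine (bisim_coind (fun '(s1, s2) => @first _ _ D (s1 >>> s2))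
                      (fun '(s1, s2) => first s1 >>> first s2) _ (s1, s2)).
  intros [t1 t2] [x z]; cbn.
  destruct (run t1 x) as [y t1']; cbn.
  destruct (run t2 y) as [w t2'].
  now exists (w, z), (t1', t2').
Qed.

Lemma loop_tighten_left (A B C D : Type) (c : C) (s1 : sf A B) (s2 : sf (B * C) (D * C)) :
  loop c (first s1 >>> s2) ~~ s1 >>> loop c s2.
Proof.
  refine (bisim_coind (fun '(c, s1, s2) => loop c (first s1 >>> s2))
                      (fun '(c, s1, s2) => s1 >>> loop c s2) _ (c, s1, s2)).
  intros [[v t1] t2] a; cbn.
  destruct (run t1 a) as [b t1']; cbn.
  destruct (run t2 (b, v)) as [[d v'] t2'].
  now exists d, (v', t1', t2').
Qed.

Lemma loop_tighten_right (A B C D : Type) (c : C) (s1 : sf (A * C) (B * C)) (s2 : sf B D) :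
  loop c (s1 >>> first s2) ~~ loop c s1 >>> s2.
Proof.
  refine (bisim_coind (fun '(c, s1, s2) => loop c (s1 >>> first s2))
                      (fun '(c, s1, s2) => loop c s1 >>> s2) _ (c, s1, s2)).
  intros [[v t1] t2] a; cbn.
  destruct (run t1 (a, v)) as [[b v'] t1']; cbn.
  destruct (run t2 b) as [d t2'].
  now exists d, (v', t1', t2').
Qed.

Lemma loop_vanish (A B C D : Type) (c : C) (d : D) (s : sf ((A * C) * D) ((B * C) * D)) :
  loop c (loop d s) ~~ loop (c, d) ((arr unassoc >>> s) >>> arr assoc).
Proof.
  refine (bisim_coind (fun '(c, d, s) => loop c (loop d s))
                      (fun '(c, d, s) => loop (c, d) ((arr unassoc >>> s) >>> arr assoc))
                      _ (c, d, s)).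
  intros [[v w] t] a; cbn.
  destruct (run t ((a, v), w)) as [[[b v'] w'] t'].
  now exists b, (v', w', t').
Qed.

Theorem theorem1 :
  (* (1) *) (forall (A B : Type) (s : sf A B), arr (fun x : A => x) >>> s ~~ s) /\
  (* (2) *) (forall (A B : Type) (s : sf A B), s >>> arr (fun x : B => x) ~~ s) /\
  (* (3) *) (forall (A B C D : Type) (s1 : sf A B) (s2 : sf B C) (s3 : sf C D),
               (s1 >>> s2) >>> s3 ~~ s1 >>> (s2 >>> s3)) /\
  (* (4) *) (forall (A B C : Type) (f : A -> B) (g : B -> C),
               arr (fun x => g (f x)) ~~ arr f >>> arr g) /\
  (* (5) *) (forall (A B C : Type) (s : sf A B),
               @first A B C s >>> arr pi1 ~~ arr pi1 >>> s) /\
  (* (6) *) (forall (A B C D : Type) (s : sf A B) (f : C -> D),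
               first s >>> arr (prodmap (fun x : B => x) f)
               ~~ arr (prodmap (fun x : A => x) f) >>> first s) /\
  (* (7) *) (forall (A B C D : Type) (s : sf A B),
               @first _ _ D (@first _ _ C s) >>> arr assoc ~~ arr assoc >>> first s) /\
  (* (8) *) (forall (A B C : Type) (f : A -> B),
               @first A B C (arr f) ~~ arr (prodmap f (fun x : C => x))) /\
  (* (9) *) (forall (A B C D : Type) (s1 : sf A B) (s2 : sf B C),
               @first _ _ D (s1 >>> s2) ~~ first s1 >>> first s2) /\
  (* (10) *) (forall (A B C D : Type) (c : C) (s1 : sf A B) (s2 : sf (B * C) (D * C)),
               loop c (first s1 >>> s2) ~~ s1 >>> loop c s2) /\
  (* (11) *) (forall (A B C D : Type) (c : C) (s1 : sf (A * C) (B * C)) (s2 : sf B D),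
               loop c (s1 >>> first s2) ~~ loop c s1 >>> s2) /\
  (* (12) *) (forall (A B C D : Type) (c : C) (d : D) (s : sf ((A * C) * D) ((B * C) * D)),
               loop c (loop d s) ~~ loop (c, d) ((arr unassoc >>> s) >>> arr assoc)).
Proof.
  repeat split.
  - exact comp_arr_idl.
  - exact comp_arr_idr.
  - exact compA.
  - exact arr_comp.
  - exact first_pi1.
  - exact first_exchange.
  - exact first_assoc.
  - exact first_arr.
  - exact first_comp.
  - exact loop_tighten_left.
  - exact loop_tighten_right.
  - exact loop_vanish.
Qed.
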